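(* For $k\in\mathbb{N}$: (1) $\mathcal{G}(2k)=k+1$; (2) $\beta_f(2k)-(k+2)=O(1/k)$; (3) $\beta_c(2k)-(k+2)\to0$ as $k\to\infty$; (4) $\mathcal{G}(2k+1)-(k+2)=O(1/k)$; (5) $\beta_f(2k+1)-(k+2)\to0$ as $k\to\infty$; (6) $\beta_c(2k+1)-(k+2)\to0$ as $k\to\infty$.
   Context: $\mathcal{G}(2k)=k+1$ and $\mathcal{G}(2k+1)=\frac{k+1+\sqrt{k^2+6k+5}}{2}$. $\beta_f(2k)=\frac{k+1+\sqrt{k^2+6k+1}}{2}$, and $\beta_f(2k+1)$ is the largest real root of $x^3-(k+2)x^2+x-(k+1)=0$. Let $(\lambda_i)_{i\ge0}$ be the Thue–Morse sequence: $\lambda_0=0$, $\lambda_{2i}=\lambda_i$, $\lambda_{2i+1}=1-\lambda_i$. For $i\ge1$ set $\lambda_i(m)=k+\lambda_i-\lambda_{i-1}$ if $m=2k$ and $\lambda_i(m)=k+\lambda_i$ if $m=2k+1$. Then $\beta_c(m)$ is the unique solution $\beta>1$ of $\sum_{i=1}^\infty \lambda_i(m)\beta^{-i}=1$. *)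

From HB Require Import structures.
From mathcomp Require Import all_boot all_order all_algebra.
From mathcomp Require Import all_classical all_reals all_analysis.
Set Implicit Arguments. Unset Strict Implicit. Unset Printing Implicit Defensive.
Import Order.TTheory GRing.Theory Num.Theory.
Import numFieldNormedType.Exports.
Local Open Scope classical_set_scope.
Local Open Scope ring_scope.

(* Thue--Morse sequence: lambda_0 = 0, lambda_{2i} = lambda_i,
   lambda_{2i+1} = 1 - lambda_i (recursion with fuel; fuel n suffices). *)
Fixpoint thue_morse_aux (fuel n : nat) : nat :=
  match fuel with
  | 0 => 0
  | f.+1 => if n == 0 then 0
            else if odd n then (1 - thue_morse_aux f n./2)%N
            else thue_morse_aux f n./2
  end.
Definition thue_morse (i : nat) : nat := thue_morse_aux i i.

Section Defs.
Variable R : realType.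

Definition GG (m : nat) : R :=
  let k := m./2 in
  if ~~ odd m then k%:R + 1
  else (k%:R + 1 + Num.sqrt (k%:R ^+ 2 + 6 * k%:R + 5)) / 2.

Definition cubic_f (k : nat) (x : R) : R :=
  x ^+ 3 - (k%:R + 2) * x ^+ 2 + x - (k%:R + 1).

Definition beta_f (m : nat) : R :=
  let k := m./2 in
  if ~~ odd m then (k%:R + 1 + Num.sqrt (k%:R ^+ 2 + 6 * k%:R + 1)) / 2
  else sup [set x : R | cubic_f k x = 0].

(* lambda_i(m), for i >= 1. *)
Definition lam (m i : nat) : R :=
  let k := m./2 in
  if ~~ odd m then k%:R + (thue_morse i)%:R - (thue_morse i.-1)%:R
  else k%:R + (thue_morse i)%:R.

Definition beta_c_eq (m : nat) (b : R) : Prop :=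
  1 < b /\
  (fun n : nat => \sum_(0 <= i < n) lam m i.+1 / b ^+ i.+1) @ \oo --> (1 : R).

(* beta_c(m): the unique solution beta > 1 (the sup of the solution set,
   which is that solution when it exists and is unique). *)
Definition beta_c (m : nat) : R := sup [set b : R | beta_c_eq m b].

End Defs.

From HB Require Import structures.
From mathcomp Require Import all_boot all_order all_algebra.
From mathcomp Require Import all_classical all_reals all_analysis.
From mathcomp Require Import ring lra.
Import Order.TTheory GRing.Theory Num.Theory.
Import numFieldNormedType.Exports.
Local Open Scope classical_set_scope.
Local Open Scope ring_scope.

(* (1), (2) and (4) are read off the closed forms: beta_f(2k) and G(2k+1) are
   (x + 1 + sqrt((x + 3)^2 - c)) / 2 with x = k and c = 8, resp. c = 4, which
   differs from x + 2 by (x + 3 - sqrt) / 2 = c / (2 (x + 3 + sqrt)) <= c / x.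
   (5): the cubic equals x^2 (x - (k+2)) + (x - (k+1)), so it has no root above
   k + 2 and changes sign on [k + 2 - 1/k, k + 2].
   (3), (6): with y = 1/beta the defining equation reads sum_i d_i y^(i+1) = 1
   where d_i = lambda_(i+1)(m) lies in [0, k+1], d_0 = k + 1 and d_1 >= k.
   Comparing with the geometric series (k+1) y / (1 - y) gives beta <= k + 2;
   keeping only the first two terms gives beta^2 >= (k+1) beta + k, hence
   beta >= k + 2 - 3/(k+3).  A solution exists by the intermediate value
   theorem, the power series being Lipschitz on [0, 1/2]. *)

Lemma thue_morse_le1 i : (thue_morse i <= 1)%N.
Proof.
suff aux f n : (thue_morse_aux f n <= 1)%N by exact: aux.
elim: f n => [|f IH] n //=.
by case: (n == 0%N); case: (odd n); rewrite ?leq_subr.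
Qed.

Section Real.
Variable R : realType.

Lemma cvg0_le_divn (u : nat -> R) (C : R) :
  (forall k, (0 < k)%N -> `|u k| <= C / k%:R) -> u @ \oo --> 0.
Proof.
move=> uC; apply/cvgrPdist_le => e e0; near=> k.
have k0 : (0 < k)%N by near: k; apply: nbhs_infty_gt.
have Cek : C / e <= k%:R by near: k; apply: nbhs_infty_ger.
rewrite sub0r normrN (le_trans (uC k k0)) // ler_pdivrMr ?ltr0n //.
by rewrite mulrC -ler_pdivrMr.
Unshelve. all: by end_near. Qed.

Lemma continuous_lipschitz (f : R -> R) (C : R) :
  (forall x y, `|f x - f y| <= C * `|x - y|) -> continuous f.
Proof.
move=> fC x; apply/cvgrPdist_lt => e e0.
have C1 : 0 < Num.max C 1 by rewrite lt_max ltr01 orbT.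
near=> y; apply: le_lt_trans (fC x y) _.
apply: le_lt_trans (_ : Num.max C 1 * `|x - y| < e).
  by rewrite ler_wpM2r // le_max lexx.
rewrite mulrC -ltr_pdivlMr //; near: y; apply: cvgr_dist_lt.
  exact: cvg_id.
by rewrite divr_gt0.
Unshelve. all: by end_near. Qed.

Lemma geometric_sum_le (y : R) n : 0 <= y < 1 ->
  \sum_(0 <= i < n) y ^+ i.+1 <= y / (1 - y).
Proof.
move=> /andP[y0 y1]; have y1' : 0 < 1 - y by rewrite subr_gt0.
have telescope : (1 - y) * \sum_(0 <= i < n) y ^+ i.+1 = y - y ^+ n.+1.
  elim: n => [|n IH]; first by rewrite big_geq // mulr0 expr1 subrr.
  by rewrite big_nat_recr //= mulrDr IH (exprS y n.+1); ring.
by rewrite ler_pdivlMr // mulrC telescope gerBl exprn_ge0.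
Qed.

Lemma distrX_le (x y r : R) n : 0 <= x <= r -> 0 <= y <= r ->
  `|x ^+ n.+1 - y ^+ n.+1| <= n.+1%:R * r ^+ n * `|x - y|.
Proof.
move=> /andP[x0 xr] /andP[y0 yr]; have r0 : 0 <= r by apply: le_trans xr.
elim: n => [|n IH]; first by rewrite !expr1 expr0 mulr1 mul1r.
have -> : x ^+ n.+2 - y ^+ n.+2 =
    x * (x ^+ n.+1 - y ^+ n.+1) + y ^+ n.+1 * (x - y) by rewrite !exprS; ring.
have -> : n.+2%:R * r ^+ n.+1 * `|x - y| =
    r * (n.+1%:R * r ^+ n * `|x - y|) + r ^+ n.+1 * `|x - y|.
  by rewrite -[n.+2]addn1 natrD exprS; ring.
apply: le_trans (ler_normD _ _) _; rewrite !normrM.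
have xr' : `|x| <= r by rewrite ger0_norm.
have yr' : `|y ^+ n.+1| <= r ^+ n.+1 by rewrite ger0_norm ?exprn_ge0 ?lerXn2r.
by rewrite lerD ?ler_pM ?ler_wpM2r.
Qed.

Lemma sum_natmul_halfX_le n : \sum_(0 <= i < n) i.+1%:R * (2^-1 : R) ^+ i <= 4.
Proof.
have closed_form : \sum_(0 <= i < n) i.+1%:R * (2^-1 : R) ^+ i =
    4 - 2 * n.+2%:R * 2^-1 ^+ n.
  elim: n => [|n IH]; first by rewrite big_geq // expr0 mulr1; lra.
  by rewrite big_nat_recr //= IH exprS -!natr1; field.
by rewrite closed_form gerBl !mulr_ge0 ?exprn_ge0.
Qed.

Definition psum (d : nat -> R) (x : R) (n : nat) : R :=
  \sum_(0 <= i < n) d i * x ^+ i.+1.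

Definition clamp_half (x : R) : R := Num.max 0 (Num.min x 2^-1).

Lemma clamp_half_itv x : 0 <= clamp_half x <= 2^-1.
Proof. by rewrite /clamp_half le_max lexx ge_max ge_min lexx orbT /= andbT; lra. Qed.

Lemma clamp_half_id x : 0 <= x <= 2^-1 -> clamp_half x = x.
Proof. by move=> /andP[x0 x2]; rewrite /clamp_half (min_idPl x2) (max_idPr x0). Qed.

Lemma clamp_half_lipschitz x y : `|clamp_half x - clamp_half y| <= `|x - y|.
Proof.
have h2 : (0 : R) < 2^-1 by rewrite invr_gt0 ltr0n.
have dxy : x - y <= `|x - y| by exact: ler_norm.
have dyx : y - x <= `|x - y| by rewrite distrC ler_norm.
rewrite /clamp_half.
by case: (leP x 2^-1) => ?; case: (leP y 2^-1) => ?; case: (leP 0 x) => ?;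
  case: (leP 0 y) => ?; rewrite ?(max_idPr (ltW h2)) ler_norml; lra.
Qed.

Section PowerSum.
Context {d : nat -> R} {M : R}.
Hypothesis d_bound : forall i, 0 <= d i <= M.

Let M_ge0 : 0 <= M. Proof. by case/andP: (d_bound 0) => /le_trans; apply. Qed.

Lemma psum_nondecreasing x : 0 <= x -> nondecreasing_seq (psum d x).
Proof.
move=> x0; apply/nondecreasing_seqP => n; rewrite /psum big_nat_recr //= lerDl.
by case/andP: (d_bound n) => d0 _; rewrite mulr_ge0 ?exprn_ge0.
Qed.

Lemma psum_le_geometric x n : 0 <= x ->
  psum d x n <= M * \sum_(0 <= i < n) x ^+ i.+1.
Proof.
move=> x0; rewrite /psum mulr_sumr; apply: ler_sum_nat => i _.
by case/andP: (d_bound i) => _ dM; rewrite ler_wpM2r ?exprn_ge0.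
Qed.

Lemma psum_cvg x : 0 <= x <= 2^-1 -> cvgn (psum d x).
Proof.
move=> /andP[x0 x2]; apply: nondecreasing_is_cvgn; first exact: psum_nondecreasing.
exists M => _ [n _ <-] /=.
apply: le_trans (psum_le_geometric x n x0) _.
rewrite -[leRHS]mulr1 ler_wpM2l //; apply: le_trans (geometric_sum_le x n _) _.
  by rewrite x0 /=; lra.
by rewrite ler_pdivrMr; lra.
Qed.

Lemma psum_lipschitz x y n : 0 <= x <= 2^-1 -> 0 <= y <= 2^-1 ->
  `|psum d x n - psum d y n| <= 4 * M * `|x - y|.
Proof.
move=> x2 y2; rewrite /psum -sumrB; apply: le_trans (ler_norm_sum _ _ _) _.
apply: le_trans
  (_ : \sum_(0 <= i < n) M * (i.+1%:R * 2^-1 ^+ i * `|x - y|) <= _).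
  apply: ler_sum_nat => i _; case/andP: (d_bound i) => d0 dM.
  by rewrite -mulrBr normrM ger0_norm // ler_pM ?distrX_le.
rewrite -mulr_sumr -mulr_suml mulrA [4 * M]mulrC.
by rewrite ler_wpM2r ?ler_wpM2l ?sum_natmul_halfX_le.
Qed.

(* Clamping to [0, 1/2] makes the limit globally Lipschitz, so the plain IVT
   applies to it. *)
Definition psum_lim x := limn (psum d (clamp_half x)).

Lemma psum_lim_cvg x : psum d (clamp_half x) @ \oo --> psum_lim x.
Proof. exact: psum_cvg (clamp_half_itv x). Qed.

Lemma psum_lim_continuous : continuous psum_lim.
Proof.
apply: (@continuous_lipschitz _ (4 * M)) => x y.
apply: (cvgr_to_le (cvg_norm (cvgB (psum_lim_cvg x) (psum_lim_cvg y)))).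
apply: nearW => n /=.
apply: le_trans (psum_lipschitz _ _ n (clamp_half_itv x) (clamp_half_itv y)) _.
by rewrite ler_wpM2l ?mulr_ge0 ?clamp_half_lipschitz.
Qed.

Lemma psum_root a b : 0 <= a -> a <= b -> b <= 2^-1 ->
  (forall n, psum d a n <= 1) -> 1 <= psum d b 1 ->
  exists2 x, a <= x <= b & psum d x @ \oo --> (1 : R).
Proof.
move=> a0 ab b2 psum_a psum_b.
have a_itv : 0 <= a <= 2^-1 by rewrite a0 (le_trans ab b2).
have b_itv : 0 <= b <= 2^-1 by rewrite (le_trans a0 ab) b2.
have lim_a : psum_lim a <= 1.
  rewrite /psum_lim clamp_half_id //.
  have cvg_a : psum d a @ \oo --> limn (psum d a) := psum_cvg _ a_itv.
  by apply: (cvgr_to_le cvg_a); apply: nearW.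
have lim_b : 1 <= psum_lim b.
  rewrite /psum_lim clamp_half_id //; apply: le_trans psum_b _.
  exact: nondecreasing_cvgn_le
    (psum_nondecreasing _ (le_trans a0 ab)) (psum_cvg _ b_itv) 1%N.
have [x] : exists2 x, x \in `[a, b] & psum_lim x = 1.
  apply: IVT => //; first exact: continuous_subspaceT psum_lim_continuous.
  by rewrite ge_min lim_a le_max lim_b orbT.
rewrite in_itv /= => /andP[ax xb] <-; exists x; first by rewrite ax xb.
by have := psum_lim_cvg x; rewrite clamp_half_id // (le_trans a0 ax) (le_trans xb b2).
Qed.

End PowerSum.

Lemma psum_inv (d : nat -> R) (b : R) :
  (fun n => \sum_(0 <= i < n) d i / b ^+ i.+1) = psum d b^-1.
Proof. by apply/funext => n; apply: eq_bigr => i _; rewrite exprVn. Qed.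

Lemma solution_le {d : nat -> R} {k b : R} : 0 <= k ->
  (forall i, 0 <= d i <= k + 1) -> 1 < b -> psum d b^-1 @ \oo --> (1 : R) ->
  b <= k + 2.
Proof.
move=> k0 d_bound b1 psum_b.
have y0 : 0 < b^-1 by rewrite invr_gt0; lra.
have y1 : b^-1 < 1 by rewrite invf_lt1 //; lra.
have geometric_bound : 1 <= (k + 1) * (b^-1 / (1 - b^-1)).
  apply: (cvgr_to_le psum_b); apply: nearW => n.
  apply: le_trans (psum_le_geometric d_bound _ n (ltW y0)) _.
  by rewrite ler_wpM2l ?geometric_sum_le ?(ltW y0) //; lra.
have by1 : b * b^-1 = 1 by rewrite mulfV //; lra.
move: geometric_bound; rewrite mulrA ler_pdivlMr ?subr_gt0 // mul1r; nra.
Qed.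

Lemma quadratic_lower_bound (k b : R) : 1 <= k -> 1 < b ->
  (k + 1) * b + k <= b ^+ 2 -> k + 2 - 3 / (k + 3) <= b.
Proof.
move=> k1 b1 quad; rewrite lerBlDr -lerBlDl ler_pdivlMr; last by lra.
have bk : k + 1 < b by nra.
have quad' : (k + 2 - b) * (k + 3) <= (k + 2 - b) ^+ 2 + 2 by nra.
by case: (lerP (-1) (k + 2 - b)) => ?; nra.
Qed.

Lemma solution_ge {d : nat -> R} {k b : R} : 1 <= k ->
  (forall i, 0 <= d i <= k + 1) -> d 0%N = k + 1 -> k <= d 1%N ->
  1 < b -> psum d b^-1 @ \oo --> (1 : R) -> k + 2 - 3 / (k + 3) <= b.
Proof.
move=> k1 d_bound d0 d1 b1 psum_b; apply: quadratic_lower_bound => //.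
have y0 : 0 <= b^-1 by rewrite invr_ge0; lra.
have two_terms : psum d b^-1 2 <= 1.
  rewrite -(cvg_lim _ psum_b) //.
  exact: nondecreasing_cvgn_le (psum_nondecreasing d_bound _ y0) (cvgP _ psum_b) 2.
move: two_terms; rewrite /psum big_nat_recr //= big_nat1 d0 => two_terms.
have by1 : b * b^-1 = 1 by rewrite mulfV //; lra.
have : (k + 1) * b^-1 + k * b^-1 ^+ 2 <= 1.
  by apply: le_trans two_terms; rewrite lerD2l ler_wpM2r ?exprn_ge0.
move=> /(ler_wpM2r (exprn_ge0 2 (ltW (lt_trans ltr01 b1)))).
have -> : ((k + 1) * b^-1 + k * b^-1 ^+ 2) * b ^+ 2 =
  (k + 1) * (b * b^-1) * b + k * (b * b^-1) ^+ 2 by ring.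
by rewrite by1 expr1n !mulr1 mul1r.
Qed.

Lemma solution_exists {d : nat -> R} {k : R} : 1 <= k ->
  (forall i, 0 <= d i <= k + 1) -> d 0%N = k + 1 ->
  exists2 b, 1 < b & psum d b^-1 @ \oo --> (1 : R).
Proof.
move=> k1 d_bound d0.
have k2_gt0 : 0 < k + 2 by lra.
have geometric_value : (k + 1) * ((k + 2)^-1 / (1 - (k + 2)^-1)) = 1.
  by field; apply/andP; split; lra.
have [x /andP[kx xk] psum_x] : exists2 x, (k + 2)^-1 <= x <= (k + 1)^-1 &
    psum d x @ \oo --> (1 : R).
  apply: (psum_root d_bound).
  - by rewrite invr_ge0; lra.
  - by rewrite lef_pV2 ?posrE; lra.
  - by rewrite lef_pV2 ?posrE; lra.
  - move=> n; rewrite -[leRHS]geometric_value.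
    apply: le_trans (psum_le_geometric d_bound _ n _) _.
      by rewrite invr_ge0; lra.
    by rewrite ler_wpM2l ?geometric_sum_le ?invr_ge0 ?invf_lt1 //=; lra.
  - by rewrite /psum big_nat1 expr1 d0 mulfV //; lra.
have x_gt0 : 0 < x by apply: lt_le_trans kx; rewrite invr_gt0.
exists x^-1; last by rewrite invrK.
by rewrite invf_gt1 //; apply: le_lt_trans xk _; rewrite invf_lt1; lra.
Qed.

Lemma sup_between (E : set R) (a b x : R) :
  E x -> a <= x -> ubound E b -> a <= sup E <= b.
Proof.
move=> Ex ax Eb; have hs : has_sup E by split; [exists x | exists b].
by rewrite (le_trans ax (sup_upper_bound hs Ex)) ge_sup //; exists x.
Qed.

Lemma beta_c_near (m k : nat) : (0 < k)%N ->
  (forall i, 0 <= lam R m i.+1 <= k%:R + 1) -> lam R m 1 = k%:R + 1 ->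
  k%:R <= lam R m 2 -> `|beta_c R m - (k%:R + 2)| <= 3 / k%:R.
Proof.
move=> k0 lam_bound lam1 lam2; have k1 : 1 <= k%:R :> R by rewrite ler1n.
have solE (b : R) : beta_c_eq m b <->
    1 < b /\ psum (fun i => lam R m i.+1) b^-1 @ \oo --> (1 : R).
  by rewrite /beta_c_eq psum_inv.
have [b b1 psum_b] := solution_exists k1 lam_bound lam1.
have /andP[lo hi] : k%:R + 2 - 3 / (k%:R + 3) <= beta_c R m <= k%:R + 2.
  apply: (@sup_between _ _ _ b); first exact/solE.
    exact: solution_ge psum_b.
  by move=> c /solE[c1 psum_c]; apply: solution_le psum_c => //; lra.
have : 3 / (k%:R + 3) <= 3 / k%:R :> R by rewrite ler_pM2l // lef_pV2 ?posrE; lra.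
by rewrite ler_norml; lra.
Qed.

Lemma thue_morse_unit i :
  0 <= (thue_morse i)%:R :> R /\ (thue_morse i)%:R <= 1 :> R.
Proof. by rewrite ler0n lern1 thue_morse_le1. Qed.

Lemma lam_even k i :
  lam R (2 * k) i = k%:R + (thue_morse i)%:R - (thue_morse i.-1)%:R.
Proof. by rewrite /lam mul2n odd_double half_double. Qed.

Lemma lam_odd k i : lam R (2 * k).+1 i = k%:R + (thue_morse i)%:R.
Proof. by rewrite /lam /= mul2n odd_double uphalf_double. Qed.

Lemma beta_c_even_near k : (0 < k)%N ->
  `|beta_c R (2 * k) - (k%:R + 2)| <= 3 / k%:R.
Proof.
move=> k0; have k1 : 1 <= k%:R :> R by rewrite ler1n.
apply: beta_c_near => // [i||]; rewrite lam_even /=.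
- have [? ?] := thue_morse_unit i.+1; have [? ?] := thue_morse_unit i.
  by apply/andP; split; lra.
- by have -> : thue_morse 1 = 1%N by []; rewrite subr0.
- by have -> : thue_morse 2 = thue_morse 1 by []; rewrite addrK.
Qed.

Lemma beta_c_odd_near k : (0 < k)%N ->
  `|beta_c R (2 * k).+1 - (k%:R + 2)| <= 3 / k%:R.
Proof.
move=> k0; have k1 : 1 <= k%:R :> R by rewrite ler1n.
apply: beta_c_near => // [i||]; rewrite lam_odd.
- by have [? ?] := thue_morse_unit i.+1; apply/andP; split; lra.
- by [].
- by rewrite lerDl.
Qed.

Lemma half_sqrt_near (x c : R) : 1 <= x -> 0 < c -> c <= 8 ->
  `|(x + 1 + Num.sqrt ((x + 3) ^+ 2 - c)) / 2 - (x + 2)| <= c / x.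
Proof.
move=> x1 c0 c8; have disc_ge0 : 0 <= (x + 3) ^+ 2 - c by rewrite expr2; nra.
set s := Num.sqrt _; have s0 : 0 <= s by apply: sqrtr_ge0.
have s_sq : s ^+ 2 = (x + 3) ^+ 2 - c by rewrite sqr_sqrtr.
have s_le : s <= x + 3.
  by rewrite -(ler_pXn2r (_ : (0 < 2)%N)) ?nnegrE // ?s_sq; lra.
have -> : (x + 1 + s) / 2 - (x + 2) = - ((x + 3 - s) / 2) by field.
rewrite normrN ger0_norm ?divr_ge0 ?subr_ge0 //.
have conj : (x + 3 - s) * (x + 3 + s) = c by rewrite -subr_sqr s_sq; ring.
have : (x + 3 - s) * x <= c by rewrite -conj ler_wpM2l ?subr_ge0 //; lra.
rewrite -ler_pdivlMr; last lra.
lra.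
Qed.

Lemma GG_even k : GG R (2 * k) = k%:R + 1.
Proof. by rewrite /GG mul2n odd_double half_double. Qed.

Lemma GG_odd_near k : (0 < k)%N ->
  `|GG R (2 * k).+1 - (k%:R + 2)| <= 4 / k%:R.
Proof.
move=> k0; rewrite /GG /= mul2n odd_double uphalf_double /=.
have -> : k%:R ^+ 2 + 6 * k%:R + 5 = (k%:R + 3) ^+ 2 - 4 :> R by ring.
by apply: half_sqrt_near; rewrite ?ler1n //; lra.
Qed.

Lemma beta_f_even_near k : (0 < k)%N ->
  `|beta_f R (2 * k) - (k%:R + 2)| <= 8 / k%:R.
Proof.
move=> k0; rewrite /beta_f mul2n odd_double half_double /=.
have -> : k%:R ^+ 2 + 6 * k%:R + 1 = (k%:R + 3) ^+ 2 - 8 :> R by ring.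
by apply: half_sqrt_near; rewrite ?ler1n //; lra.
Qed.

Lemma cubic_f_continuous k : continuous (@cubic_f R k).
Proof.
have -> : @cubic_f R k =
    horner ('X^3 - (k%:R + 2)%:P * 'X^2 + 'X - (k%:R + 1)%:P).
  by apply/funext => x; rewrite /cubic_f !hornerE.
exact: continuous_horner.
Qed.

Lemma cubic_f_decomp k (x : R) :
  cubic_f k x = x ^+ 2 * (x - (k%:R + 2)) + (x - (k%:R + 1)).
Proof. by rewrite /cubic_f (exprS x 2); ring. Qed.

Lemma cubic_f_root_le k (x : R) : cubic_f k x = 0 -> x <= k%:R + 2.
Proof.
rewrite cubic_f_decomp => root; rewrite leNgt; apply/negP => x_gt.
have : 0 <= x ^+ 2 * (x - (k%:R + 2)) by rewrite mulr_ge0 ?sqr_ge0 ?subr_ge0 ?ltW.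
lra.
Qed.

Lemma beta_f_odd_near k : (0 < k)%N ->
  `|beta_f R (2 * k).+1 - (k%:R + 2)| <= 1 / k%:R.
Proof.
move=> k0; rewrite /beta_f /= mul2n odd_double uphalf_double /=.
have k1 : 1 <= k%:R :> R by rewrite ler1n.
set e := 1 / k%:R; have e0 : 0 < e by rewrite divr_gt0 //; lra.
have ek : e * k%:R = 1 by rewrite /e mul1r mulVf //; lra.
have [x] : exists2 x : R, x \in `[k%:R + 2 - e, k%:R + 2] & cubic_f k x = 0.
  apply: IVT; first lra; first exact: continuous_subspaceT (cubic_f_continuous k).
  rewrite !cubic_f_decomp ge_min le_max; apply/andP; split.
    by apply/orP; left; nra.
  by apply/orP; right; lra.
rewrite in_itv /= => /andP[lo hi] root.
have /andP[lo' hi'] :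
    k%:R + 2 - e <= sup [set x : R | cubic_f k x = 0] <= k%:R + 2.
  exact: (@sup_between _ _ _ x) (@cubic_f_root_le k).
by rewrite ler_norml; lra.
Qed.

End Real.

Theorem theorem4p8 (R : realType) :
  (forall k : nat, GG R (2 * k) = k%:R + 1) /\
  (exists C : R, exists N : nat, forall k : nat, (N <= k)%N -> (0 < k)%N ->
     `|beta_f R (2 * k) - (k%:R + 2)| <= C / k%:R) /\
  ((fun k : nat => beta_c R (2 * k) - (k%:R + 2)) @ \oo --> (0 : R)) /\
  (exists C : R, exists N : nat, forall k : nat, (N <= k)%N -> (0 < k)%N ->
     `|GG R (2 * k).+1 - (k%:R + 2)| <= C / k%:R) /\
  ((fun k : nat => beta_f R (2 * k).+1 - (k%:R + 2)) @ \oo --> (0 : R)) /\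
  ((fun k : nat => beta_c R (2 * k).+1 - (k%:R + 2)) @ \oo --> (0 : R)).
Proof.
split; first exact: GG_even.
split; first by exists 8, 0%N => k _; apply: beta_f_even_near.
split; first exact: cvg0_le_divn (@beta_c_even_near R).
split; first by exists 4, 0%N => k _; apply: GG_odd_near.
split; first exact: cvg0_le_divn (@beta_f_odd_near R).
exact: cvg0_le_divn (@beta_c_odd_near R).
Qed.
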